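(* Let $p$ be a prime, $n\ge2$, $m_1,\dots,m_n\ge2$, and $\ell_k,r_k\in\mathbb{Z}_p$. Let $\mathbb{E}$ be the splitting field over $\mathbb{Z}_p$ of the polynomials $g_{m_k;\ell_k,r_k}$ mod $p$, $1\le k\le n$. For each $k$ let $U_k\in GL_{m_k}(\mathbb{E})$ be such that $J_k:=U_k^{-1}S_{m_k}(\ell_k,r_k)U_k$ is a canonical (upper triangular) Jordan form over $\mathbb{E}$, and put $U_{T_n}=U_n\otimes U_{n-1}\otimes\cdots\otimes U_1$. Then $U_{T_n}$ is invertible and $$ U_{T_n}^{-1}T_nU_{T_n}=\widetilde J_n,\qquad\text{where }\widetilde J_1=J_1,\ \widetilde J_k=I_{m_k}\otimes\widetilde J_{k-1}+J_k\otimes I_{m_1\cdots m_{k-1}}\ (2\le k\le n), $$ which is an upper triangular (generalized Jordan) matrix. Moreover, $\widetilde J_n$ is a canonical Jordan form if and only if $S_{m_k}(\ell_k,r_k)$ is diagonalizable over $\mathbb{E}$ for every $k\ge2$, and $T_n$ is diagonalizable over $\mathbb{E}$ if and only if $S_{m_k}(\ell_k,r_k)$ is diagonalizable over $\mathbb{E}$ for every $1\le k\le n$.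
   Context: For $k\ge1$ and $t_1,t_2\in\mathbb{Z}_p$, $S_k(t_1,t_2)$ is the $k\times k$ tridiagonal matrix with zeros on the main diagonal, every subdiagonal entry (positions $(i+1,i)$) equal to $t_1$, and every superdiagonal entry (positions $(i,i+1)$) equal to $t_2$. $I_r$ is the $r\times r$ identity, $\otimes$ the Kronecker product. $T_1=S_{m_1}(\ell_1,r_1)$ and $T_k=I_{m_k}\otimes T_{k-1}+S_{m_k}(\ell_k,r_k)\otimes I_{m_1\cdots m_{k-1}}$ for $2\le k\le n$. For $j\ge0$, $g_{j;t_1,t_2}(x)=\sum_{i=0}^{\lfloor j/2\rfloor}(-1)^i(t_1t_2)^i\binom{j-i}{i}x^{j-2i}$ (the characteristic polynomial of $S_j(t_1,t_2)$). A canonical Jordan form is a block diagonal matrix of Jordan blocks, each having a single eigenvalue on its diagonal, $1$'s on its superdiagonal and zeros elsewhere. *)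

From HB Require Import structures.
From mathcomp Require Import all_boot all_order all_algebra all_field.
Set Implicit Arguments. Unset Strict Implicit. Unset Printing Implicit Defensive.
Import Order.TTheory GRing.Theory Num.Theory.
Local Open Scope ring_scope.

(* Row index i of the result corresponds to the
   pair (i1, i2) = enum_val i of 'I_m1 * 'I_m2 (lexicographic enumeration,
   i.e. i = i1 * m2 + i2, see kron_index_val below), same for columns. *)
Definition kron (R : nzRingType) (m1 n1 m2 n2 : nat)
    (A : 'M[R]_(m1, n1)) (B : 'M[R]_(m2, n2)) : 'M[R]_(m1 * m2, n1 * n2) :=
  \matrix_(i, j)
    (let ik := enum_val (cast_ord (esym (mxvec_cast m1 m2)) i) in
     let jk := enum_val (cast_ord (esym (mxvec_cast n1 n2)) j) in
     A ik.1 jk.1 * B ik.2 jk.2).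

Definition Smx (R : nzRingType) (k : nat) (t1 t2 : R) : 'M[R]_k :=
  \matrix_(i, j) (if i == j.+1 :> nat then t1
                  else if j == i.+1 :> nat then t2 else 0).

Definition gpoly (R : nzRingType) (j : nat) (t1 t2 : R) : {poly R} :=
  \sum_(i < (j./2).+1)
     (((-1) ^+ i * (t1 * t2) ^+ i * ('C(j - i, i))%:R) *: 'X^(j - i.*2)).

(* dimT m j = m_1 * ... * m_(j+1)  (paper indexing m_1, m_2, ...) *)
Fixpoint dimT (m : nat -> nat) (j : nat) : nat :=
  match j with
  | 0 => m 1%N
  | j'.+1 => (m j'.+2 * dimT m j')%N
  end.

(* ksum A j = paper's X_(j+1) where X_1 = A_1,
   X_k = I_(m_k) (x) X_(k-1) + A_k (x) I_(m_1...m_(k-1)). *)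
Fixpoint ksum (R : nzRingType) (m : nat -> nat) (A : forall k, 'M[R]_(m k))
    (j : nat) : 'M[R]_(dimT m j) :=
  match j return 'M[R]_(dimT m j) with
  | 0 => A 1%N
  | j'.+1 => kron (1%:M : 'M[R]_(m j'.+2)) (ksum A j')
             + kron (A j'.+2) (1%:M : 'M[R]_(dimT m j'))
  end.

(* kprod A j = A_(j+1) (x) A_j (x) ... (x) A_1 *)
Fixpoint kprod (R : nzRingType) (m : nat -> nat) (A : forall k, 'M[R]_(m k))
    (j : nat) : 'M[R]_(dimT m j) :=
  match j return 'M[R]_(dimT m j) with
  | 0 => A 1%N
  | j'.+1 => kron (A j'.+2) (kprod A j')
  end.

(* Canonical Jordan form: block diagonal of Jordan blocks, i.e. all entries
   outside the diagonal and superdiagonal vanish, and each superdiagonal entry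
   is either 0 (block boundary) or 1 (inside a block, same eigenvalue). *)
Definition is_jordan_mx (R : nzRingType) (k : nat) (A : 'M[R]_k) : Prop :=
  forall i j : 'I_k,
    ((j != i :> nat) && (j != i.+1 :> nat) -> A i j = 0) /\
    (j = i.+1 :> nat -> A i j = 0 \/ (A i j = 1 /\ A i i = A j j)).

Definition is_upper_trig (R : nzRingType) (k : nat) (A : 'M[R]_k) : Prop :=
  forall i j : 'I_k, (j < i)%N -> A i j = 0.

Lemma kronE (R : nzRingType) m1 n1 m2 n2 (A : 'M[R]_(m1,n1)) (B : 'M[R]_(m2,n2))
  a b c d :
  kron A B (mxvec_index a c) (mxvec_index b d) = A a b * B c d.
Proof. by rewrite mxE /mxvec_index !cast_ordK !enum_rankK. Qed.

From HB Require Import structures.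
From mathcomp Require Import all_boot all_order all_algebra all_field.
From mathcomp Require Import zify mxtens.
Import GRing.Theory.
Local Open Scope ring_scope.
Set Implicit Arguments. Unset Strict Implicit. Unset Printing Implicit Defensive.

(* Since (A (x) B)(C (x) D) = AC (x) BD, conjugating the Kronecker sum
   T_k = S_k (x) I + I (x) T_(k-1) by U_k (x) U_(T_(k-1)) conjugates both
   summands separately, which gives J~_n by induction.  Kronecker sums of upper
   triangular matrices are upper triangular, and Y (x) I + I (x) X is a Jordan
   matrix iff X is one and Y is diagonal: an off-diagonal entry of Y lands at
   distance at least m_1...m_(k-1) >= 2 from the diagonal.  Finally a Jordan
   matrix is diagonalizable iff it is diagonal; otherwise it has a generalized
   eigenvector of rank 2, and tensoring such a vector of one factor with the last
   basis row (a left eigenvector of any upper triangular matrix) gives one of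
   the Kronecker sum, which diagonalizable matrices never have. *)

Lemma index_allpairs_pair (T1 T2 : eqType) (s : seq T1) (t : seq T2) x y :
  x \in s -> y \in t ->
  index (x, y) [seq (a, b) | a <- s, b <- t] = (index x s * size t + index y t)%N.
Proof.
elim: s => [//|a s IHs] xs yt; rewrite allpairs_cons index_cat /=.
have -> : ((x, y) \in [seq (a, b) | b <- t]) = (x == a).
  by apply/mapP/eqP => [[b _ [->]] // | ->]; exists y.
case: eqP => [-> | /eqP x_neq_a]; first by rewrite eqxx index_map // => u v [].
have {}xs : x \in s by move: xs; rewrite inE (negbTE x_neq_a).
by rewrite eq_sym (negbTE x_neq_a) IHs // size_map mulSn addnA.
Qed.

Lemma mxvec_index_mxtens m n (i : 'I_m) (j : 'I_n) :
  mxvec_index i j = mxtens_index (i, j).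
Proof.
apply: val_inj; rewrite /= /mxvec_index /= /enum_rank enum_rank_in.unlock insubdK.
  have -> : enum {: 'I_m * 'I_n} = [seq (a, b) | a <- enum 'I_m, b <- enum 'I_n].
    by rewrite enumT unlock.
  by rewrite index_allpairs_pair ?mem_enum // !index_enum_ord size_enum_ord.
by rewrite cardE [_ \in _]index_mem mem_enum.
Qed.

Lemma kron_tensmx (R : nzRingType) m1 n1 m2 n2
    (A : 'M[R]_(m1, n1)) (B : 'M[R]_(m2, n2)) :
  kron A B = A *t B.
Proof.
apply/matrixP => i j; case/mxvec_indexP: i => i1 i2; case/mxvec_indexP: j => j1 j2.
by rewrite kronE !mxvec_index_mxtens tensmxE.
Qed.

Lemma mxtens_index_eq m n (i k : 'I_m) (j l : 'I_n) :
  (mxtens_index (i, j) == mxtens_index (k, l)) = (i == k) && (j == l).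
Proof. by rewrite (can_eq (@mxtens_indexK m n)). Qed.

Section TensorProduct.
Variable R : comNzRingType.

Lemma tensmxBl m1 n1 m2 n2 (A B : 'M[R]_(m1, n1)) (C : 'M[R]_(m2, n2)) :
  (A - B) *t C = A *t C - B *t C.
Proof. by apply/matrixP => i j; rewrite !mxE mulrBl. Qed.

Lemma tensmxBr m1 n1 m2 n2 (A : 'M[R]_(m1, n1)) (B C : 'M[R]_(m2, n2)) :
  A *t (B - C) = A *t B - A *t C.
Proof. by apply/matrixP => i j; rewrite !mxE mulrBr. Qed.

Lemma tensmx_scalar m n (a b : R) : (a%:M : 'M_m) *t (b%:M : 'M_n) = (a * b)%:M.
Proof.
apply/matrixP => i j; case: (mxtens_indexP i) => i1 i2; case: (mxtens_indexP j) => j1 j2.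
rewrite tensmxE !mxE mxtens_index_eq.
by case: (i1 == j1); case: (i2 == j2); rewrite /= ?mulr1n ?mulr0n ?mulr0 ?mul0r.
Qed.

Lemma tensmx1 m n : (1%:M : 'M[R]_m) *t (1%:M : 'M[R]_n) = 1%:M.
Proof. by rewrite tensmx_scalar mulr1. Qed.

End TensorProduct.

Lemma invmx_tens (F : fieldType) p q (P : 'M[F]_p) (Q : 'M[F]_q) :
  P \in unitmx -> Q \in unitmx ->
  P *t Q \in unitmx /\ invmx (P *t Q) = invmx P *t invmx Q.
Proof.
move=> Pu Qu; have PQ_inv : P *t Q *m (invmx P *t invmx Q) = 1%:M.
  by rewrite tensmx_mul !mulmxV // tensmx1.
have PQu := (mulmx1_unit PQ_inv).1; split => //.
by rewrite -[LHS]mulmx1 -PQ_inv mulmxA mulVmx ?mul1mx.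
Qed.

Lemma tensmx_neq0 (F : idomainType) m1 n1 m2 n2
    (A : 'M[F]_(m1, n1)) (B : 'M[F]_(m2, n2)) :
  A != 0 -> B != 0 -> A *t B != 0.
Proof.
move=> /matrix0Pn[i1 [j1 Aij]] /matrix0Pn[i2 [j2 Bij]]; apply/matrix0Pn.
by exists (mxtens_index (i1, i2)), (mxtens_index (j1, j2)); rewrite tensmxE mulf_neq0.
Qed.

Lemma delta_mx_neq0 (R : nzRingType) m n (i : 'I_m) (j : 'I_n) :
  delta_mx i j != 0 :> 'M[R]_(m, n).
Proof. by apply/matrix0Pn; exists i, j; rewrite mxE !eqxx oner_neq0. Qed.

Definition kronsum (R : nzRingType) p q (A : 'M[R]_p) (B : 'M[R]_q) : 'M[R]_(p * q) :=
  A *t 1%:M + 1%:M *t B.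

Section KroneckerSum.
Variables (R : nzRingType) (p q : nat) (A : 'M[R]_p) (B : 'M[R]_q).

Lemma kronsumE i1 i2 j1 j2 :
  kronsum A B (mxtens_index (i1, i2)) (mxtens_index (j1, j2)) =
  A i1 j1 * (i2 == j2)%:R + (i1 == j1)%:R * B i2 j2.
Proof. by rewrite mxE !tensmxE !mxE. Qed.

Lemma kronsum_upper_trig :
  is_upper_trig A -> is_upper_trig B -> is_upper_trig (kronsum A B).
Proof.
move=> uA uB i j; case: (mxtens_indexP i) => i1 i2; case: (mxtens_indexP j) => j1 j2 /=.
rewrite kronsumE => lt_ji; have := ltn_ord i2; have := ltn_ord j2.
case: (ltngtP j1 i1) => [lt1 _ _ | lt1 lt_j2 lt_i2 | /val_inj eq1 _ _].
- have /negbTE ne1 : i1 != j1 by rewrite -val_eqE /= gtn_eqF.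
  by rewrite uA // ne1 !mul0r addr0.
- nia.
- have lt2 : (j2 < i2)%N by subst j1; nia.
  have /negbTE ne2 : i2 != j2 by rewrite -val_eqE /= gtn_eqF.
  by rewrite eq1 ne2 mulr0 uB // mulr0 addr0.
Qed.

Lemma kronsum_diag : is_diag_mx A -> is_diag_mx B -> is_diag_mx (kronsum A B).
Proof.
move=> /is_diag_mxP dA /is_diag_mxP dB; apply/is_diag_mxP => i j.
case: (mxtens_indexP i) => i1 i2; case: (mxtens_indexP j) => j1 j2.
rewrite val_eqE mxtens_index_eq kronsumE.
case: (eqVneq i1 j1) => [-> | ne1] /= ne2.
- by rewrite (negbTE ne2) dB ?mulr0 ?add0r.
- by rewrite dA // mul0r mul0r addr0.
Qed.

Lemma kronsum_jordan : (0 < p)%N -> (1 < q)%N ->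
  is_jordan_mx (kronsum A B) <-> is_diag_mx A /\ is_jordan_mx B.
Proof.
move=> p_gt0 q_gt1; split => [jM | [/is_diag_mxP dA jB]].
  split.
    apply/is_diag_mxP => i1 j1 ne1; pose z := Ordinal (ltnW q_gt1).
    have [c1 _] := jM (mxtens_index (i1, z)) (mxtens_index (j1, z)).
    move: c1; rewrite /= kronsumE eqxx mulr1 (negbTE (_ : i1 != j1)) ?mul0r ?addr0.
      by apply; apply/andP; split; nia.
    by rewrite -val_eqE.
  move=> i2 j2; pose o := Ordinal p_gt0.
  have [c1 c2] := jM (mxtens_index (o, i2)) (mxtens_index (o, j2)).
  rewrite /= !kronsumE !eqxx !mul1r mulr1 in c1 c2.
  have [-> | ne2] := eqVneq i2 j2; first by split => [/andP[/eqP] | /n_Sn].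
  rewrite (negbTE ne2) mulr0 add0r in c1 c2; split => [/andP[h1 h2] | h].
    by apply: c1; apply/andP; split; lia.
  have [-> | [-> /addrI ->]] := c2 ltac:(lia); [by left | by right].
move=> i j; case: (mxtens_indexP i) => i1 i2; case: (mxtens_indexP j) => j1 j2 /=.
rewrite !kronsumE; have [<- | ne1] := eqVneq i1 j1; last first.
  by rewrite dA ?mul0r ?addr0 //; split=> // _; left.
have [c1 c2] := jB i2 j2.
have [<- | ne2] := eqVneq i2 j2; first by split => [/andP[/eqP] | /n_Sn].
rewrite !eqxx mulr0 add0r mulr1 !mul1r; split => [/andP[h1 h2] | h].
  by apply: c1; apply/andP; split; lia.
have [-> | [-> ->]] := c2 ltac:(lia); [by left | by right].
Qed.

End KroneckerSum.

Section KroneckerSumAlgebra.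
Variables (R : comNzRingType) (p q : nat).
Implicit Types (A : 'M[R]_p) (B : 'M[R]_q).

Lemma kronsum_shift A B a b :
  kronsum A B - (a + b)%:M = kronsum (A - a%:M) (B - b%:M).
Proof.
rewrite /kronsum tensmxBl tensmxBr !tensmx_scalar mulr1 mul1r raddfD /=.
by rewrite opprD addrACA.
Qed.

Lemma tensmx_mul_kronsum r (x : 'M[R]_(r, p)) (y : 'M[R]_(r, q)) A B :
  (x *t y) *m kronsum A B = (x *m A) *t y + x *t (y *m B).
Proof. by rewrite mulmxDr !tensmx_mul !mulmx1. Qed.

Lemma map_kronsum (S : comNzRingType) (f : {rmorphism R -> S}) A B :
  map_mx f (kronsum A B) = kronsum (map_mx f A) (map_mx f B).
Proof. by rewrite map_mxD !map_mxT !map_mx1. Qed.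

End KroneckerSumAlgebra.

Lemma kronsum_conj (F : fieldType) p q (A P : 'M[F]_p) (B Q : 'M[F]_q) :
  P \in unitmx -> Q \in unitmx ->
  invmx (P *t Q) *m kronsum A B *m (P *t Q) =
  kronsum (invmx P *m A *m P) (invmx Q *m B *m Q).
Proof.
move=> Pu Qu; have [_ ->] := invmx_tens Pu Qu.
by rewrite mulmxDr mulmxDl !tensmx_mul !mulmx1 !mulVmx.
Qed.

Section Defective.
Variable F : fieldType.

Definition defective n (A : 'M[F]_n) :=
  exists (v : 'rV_n) (c : F),
    v *m (A - c%:M) != 0 /\ v *m (A - c%:M) *m (A - c%:M) = 0.

Lemma defective_conjmx n (A P : 'M[F]_n) :
  P \in unitmx -> defective A -> defective (P *m A *m invmx P).
Proof.
move=> Pu [v [c [v1_neq0 v2_eq0]]].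
have shift : P *m A *m invmx P - c%:M = P *m (A - c%:M) *m invmx P.
  by rewrite mulmxBr mulmxBl mul_mx_scalar -scalemxAl mulmxV ?scalemx1.
exists (v *m invmx P), c; rewrite shift !mulmxA mulmxKV //; split.
  move: v1_neq0; apply: contra_neq => /(congr1 (mulmx^~ P)).
  by rewrite mulmxKV // mul0mx.
by rewrite mulmxKV // v2_eq0 mul0mx.
Qed.

Lemma diag_not_defective n (D : 'M[F]_n) : is_diag_mx D -> ~ defective D.
Proof.
move=> /is_diag_mxP dD [v [c []]]; set G := D - c%:M.
have dG (i j : 'I_n) : i != j -> G i j = 0.
  by move=> ne; rewrite !mxE dD ?val_eqE // (negbTE ne) subr0.
have mulG m (w : 'M[F]_(m, n)) i j : (w *m G) i j = w i j * G j j.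
  by rewrite mxE (bigD1 j) //= big1 ?addr0 // => k ne; rewrite dG ?mulr0.
clearbody G => /negP v1_neq0 /matrixP v2_eq0.
apply: v1_neq0; apply/eqP/matrixP => i j.
rewrite mulG mxE; have /eqP := v2_eq0 i j.
by rewrite !mulG !mxE mulf_eq0 => /orP[/eqP // | /eqP ->]; rewrite mulr0.
Qed.

Lemma diagonalizable_not_defective n (A : 'M[F]_n) :
  diagonalizable A -> ~ defective A.
Proof.
move=> [P Pu dPA] /(defective_conjmx Pu); rewrite -conjumx //.
exact: diag_not_defective.
Qed.

End Defective.

Section JordanDefective.
Variables (F : fieldType) (n : nat) (A : 'M[F]_n).
Hypothesis jA : is_jordan_mx A.

Lemma jordan_upper_trig : is_upper_trig A.
Proof.
move=> i j lt_ji; have [c1 _] := jA i j; apply: c1.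
by apply/andP; split; apply/eqP => e; move: lt_ji; rewrite e; lia.
Qed.

Lemma jordan_offdiag_neq0 (i j : 'I_n) : i != j :> nat -> A i j != 0 ->
  j = i.+1 :> nat /\ A i j = 1 /\ A i i = A j j.
Proof.
move=> ne Aij; have [c1 c2] := jA i j.
have [ji | nji] := eqVneq (j : nat) i.+1.
  by have [/eqP | ] := c2 ji; [rewrite (negbTE Aij) | ].
by move: Aij; rewrite c1 ?eqxx // nji eq_sym ne.
Qed.

Lemma jordan_defective : ~~ is_diag_mx A -> defective A.
Proof.
move=> /is_diag_mxP not_diag.
pose P (i : 'I_n) := [exists j : 'I_n, (i != j :> nat) && (A i j != 0)].
have [i0 Pi0] : exists i, P i.
  case: (pickP P) => [i0 Pi0 | noP]; first by exists i0.
  exfalso; apply: not_diag => i j ne; apply/eqP; move/negbT/existsPn/(_ j): (noP i).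
  by rewrite ne negbK.
(* The last row k with an off-diagonal entry has its 1 at (k, k+1), so that
   e_k (A - A_kk) = e_(k+1), while e_(k+1) (A - A_kk) = 0 since row k+1 is
   diagonal. *)
case: (arg_maxnP (fun i : 'I_n => nat_of_ord i) Pi0) => k.
move=> /existsP[j /andP[ne_kj Akj]] k_max.
have [jk [Akj1 Akk]] := jordan_offdiag_neq0 ne_kj Akj.
have ej_null : delta_mx (0 : 'I_1) j *m (A - (A k k)%:M) = 0.
  apply/rowP => t; rewrite -rowE !mxE; have [<- | ne_jt] := eqVneq j t.
    by rewrite Akk mulr1n subrr.
  rewrite mulr0n subr0; apply/eqP; apply: contraT => Ajt.
  have Pj : P j by apply/existsP; exists t; rewrite Ajt andbT.
  by move: (k_max j Pj); rewrite /= jk; lia.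
have ek_step : delta_mx (0 : 'I_1) k *m (A - (A k k)%:M) = delta_mx (0 : 'I_1) j.
  apply/rowP => t; rewrite -rowE !mxE eqxx /=; have [<- | ne_kt] := eqVneq k t.
    by rewrite subrr (negbTE (ne_kj : k != j :> 'I_n)).
  rewrite /= mulr0n subr0; have [<- | ne_jt] := eqVneq j t; first by rewrite Akj1.
  apply/eqP; apply: contraT => Akt.
  have [tk _] := jordan_offdiag_neq0 (ne_kt : k != t :> nat) Akt.
  by case/eqP: ne_jt; apply: val_inj; rewrite /= tk jk.
exists (delta_mx 0 k), (A k k); rewrite ek_step ej_null.
by split => //; apply: delta_mx_neq0.
Qed.

End JordanDefective.

Lemma upper_trig_row_last (R : nzRingType) n (A : 'M[R]_n.+1) :
  is_upper_trig A -> row ord_max A = A ord_max ord_max *: delta_mx 0 ord_max.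
Proof.
move=> uA; apply/rowP => j; rewrite !mxE eqxx /=.
have [-> | ne] := eqVneq j ord_max; first by rewrite mulr1.
by rewrite uA ?mulr0 // ltn_neqAle leq_ord andbT; move: ne; rewrite -val_eqE.
Qed.

Lemma upper_trig_last_eigenrow (F : fieldType) n (A : 'M[F]_n.+1) :
  is_upper_trig A ->
  delta_mx 0 ord_max *m (A - (A ord_max ord_max)%:M) = 0 :> 'rV_n.+1.
Proof.
by move=> uA; rewrite mulmxBr -rowE upper_trig_row_last // mul_mx_scalar subrr.
Qed.

Lemma defective_kronsumr (F : fieldType) p q (A : 'M[F]_p) (B : 'M[F]_q) :
  (0 < p)%N -> is_upper_trig A -> defective B -> defective (kronsum A B).
Proof.
case: p A => [//|p] A _ uA [v [c [v1_neq0 v2_eq0]]].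
pose e : 'rV[F]_p.+1 := delta_mx 0 ord_max; pose a := A ord_max ord_max.
have step (w : 'rV_q) :
    (e *t w) *m kronsum (A - a%:M) (B - c%:M) = e *t (w *m (B - c%:M)).
  by rewrite tensmx_mul_kronsum upper_trig_last_eigenrow // tens0mx add0r.
exists (e *t v), (a + c); rewrite kronsum_shift !step v2_eq0 tensmx0.
by split => //; exact: (tensmx_neq0 (delta_mx_neq0 F (0 : 'I_1) ord_max) v1_neq0).
Qed.

Lemma defective_kronsuml (F : fieldType) p q (A : 'M[F]_p) (B : 'M[F]_q) :
  (0 < q)%N -> is_upper_trig B -> defective A -> defective (kronsum A B).
Proof.
case: q B => [//|q] B _ uB [v [c [v1_neq0 v2_eq0]]].
pose e : 'rV[F]_q.+1 := delta_mx 0 ord_max; pose b := B ord_max ord_max.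
have step (w : 'rV_p) :
    (w *t e) *m kronsum (A - c%:M) (B - b%:M) = (w *m (A - c%:M)) *t e.
  by rewrite tensmx_mul_kronsum upper_trig_last_eigenrow // tensmx0 addr0.
exists (v *t e), (c + b); rewrite kronsum_shift !step v2_eq0 tens0mx.
by split => //; exact: (tensmx_neq0 v1_neq0 (delta_mx_neq0 F (0 : 'I_1) ord_max)).
Qed.

Section Diagonalizable.
Variables (F : fieldType) (n : nat).

Lemma diagonalizable_conj (A P : 'M[F]_n) :
  P \in unitmx -> diagonalizable (invmx P *m A *m P) <-> diagonalizable A.
Proof.
move=> Pu; rewrite -conjVmx //; have iPu : invmx P \in unitmx by rewrite unitmx_inv.
split => [[Q Qu dQ] | [Q Qu dQ]].
  by exists (Q *m invmx P); rewrite ?unitmx_mul ?Qu // /similar_to conjuMumx.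
exists (Q *m P); first by rewrite unitmx_mul Qu.
by rewrite /similar_to conjuMumx // conjmxVK.
Qed.

Lemma diag_diagonalizable (D : 'M[F]_n) : is_diag_mx D -> diagonalizable D.
Proof. by exists 1%:M; rewrite ?unitmx1 // /similar_to conj1mx. Qed.

Lemma jordan_diagonalizable (J : 'M[F]_n) :
  is_jordan_mx J -> diagonalizable J <-> is_diag_mx J.
Proof.
move=> jJ; split => [dJ | /diag_diagonalizable //].
by apply/contraT => /(jordan_defective jJ) /(diagonalizable_not_defective dJ).
Qed.

End Diagonalizable.

Section IteratedKronecker.
Variable m : nat -> nat.

Lemma ksumS (R : nzRingType) (A : forall k, 'M[R]_(m k)) j :
  ksum A j.+1 = kronsum (A j.+2) (ksum A j).
Proof. by rewrite /= !kron_tensmx addrC. Qed.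

Lemma kprodS (R : nzRingType) (A : forall k, 'M[R]_(m k)) j :
  kprod A j.+1 = A j.+2 *t kprod A j.
Proof. by rewrite /= kron_tensmx. Qed.

Lemma dimT_gt1 j : (forall k, (1 <= k <= j.+1)%N -> (1 < m k)%N) -> (1 < dimT m j)%N.
Proof.
elim: j => [|j IHj] m_gt1 /=; first exact: m_gt1.
have := IHj (fun k hk => m_gt1 k ltac:(lia)); have := m_gt1 j.+2 ltac:(lia); nia.
Qed.

Lemma kprod_conj_ksum (R : comNzRingType) (F : fieldType) (f : {rmorphism R -> F})
    (S : forall k, 'M[R]_(m k)) (U : forall k, 'M[F]_(m k)) j :
  (forall k, (1 <= k <= j.+1)%N -> U k \in unitmx) ->
  kprod U j \in unitmx /\
  invmx (kprod U j) *m map_mx f (ksum S j) *m kprod U j =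
    ksum (fun k => invmx (U k) *m map_mx f (S k) *m U k) j.
Proof.
elim: j => [|j IHj] U_unit; first by split => //; apply: U_unit.
have [Uj_unit conj_j] := IHj (fun k hk => U_unit k ltac:(lia)).
have U_unit' := U_unit j.+2 ltac:(lia).
rewrite !ksumS kprodS map_kronsum kronsum_conj // conj_j.
by split => //; have [] := invmx_tens U_unit' Uj_unit.
Qed.

Variables (F : fieldType) (J : forall k, 'M[F]_(m k)).

Lemma ksum_upper_trig j : (forall k, (1 <= k <= j.+1)%N -> is_upper_trig (J k)) ->
  is_upper_trig (ksum J j).
Proof.
elim: j => [|j IHj] uJ; first exact: uJ.
rewrite ksumS; apply: kronsum_upper_trig; last apply: IHj => k hk; apply: uJ; lia.
Qed.

Lemma ksum_diag j : (forall k, (1 <= k <= j.+1)%N -> is_diag_mx (J k)) ->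
  is_diag_mx (ksum J j).
Proof.
elim: j => [|j IHj] dJ; first exact: dJ.
rewrite ksumS; apply: kronsum_diag; last apply: IHj => k hk; apply: dJ; lia.
Qed.

Lemma ksum_jordan j : (forall k, (1 <= k <= j.+1)%N -> (1 < m k)%N) ->
  is_jordan_mx (J 1%N) ->
  is_jordan_mx (ksum J j) <-> (forall k, (2 <= k <= j.+1)%N -> is_diag_mx (J k)).
Proof.
move=> m_gt1 jJ1; elim: j m_gt1 => [|j IHj] m_gt1; first by split => // _ k; lia.
have p_gt0 : (0 < m j.+2)%N by apply/ltnW/m_gt1; lia.
have q_gt1 : (1 < dimT m j)%N by apply: dimT_gt1 => k hk; apply: m_gt1; lia.
rewrite ksumS kronsum_jordan // IHj => [|k hk]; last by apply: m_gt1; lia.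
split => [[dJ dJs] k hk | dJs]; last by split => [|k hk]; apply: dJs; lia.
by have [-> // | ne] := eqVneq k j.+2; apply: dJs; lia.
Qed.

Lemma ksum_defective j : (forall k, (1 <= k <= j.+1)%N -> (1 < m k)%N) ->
  (forall k, (1 <= k <= j.+1)%N -> is_upper_trig (J k)) ->
  forall k, (1 <= k <= j.+1)%N -> defective (J k) -> defective (ksum J j).
Proof.
elim: j => [|j IHj] m_gt1 uJ k hk dJk; first by move: dJk; have -> : k = 1%N by lia.
rewrite ksumS; have [ek | ne] := eqVneq k j.+2.
  apply: defective_kronsuml; last by rewrite -ek.
    by apply/ltnW/dimT_gt1 => i hi; apply: m_gt1; lia.
  by apply: ksum_upper_trig => i hi; apply: uJ; lia.
apply: defective_kronsumr; [apply/ltnW/m_gt1; lia | apply: uJ; lia |].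
apply: (IHj _ _ k _ dJk) => [i hi | i hi |]; [apply: m_gt1 | apply: uJ |]; lia.
Qed.

Lemma ksum_diagonalizable j : (forall k, (1 <= k <= j.+1)%N -> (1 < m k)%N) ->
  (forall k, (1 <= k <= j.+1)%N -> is_jordan_mx (J k)) ->
  diagonalizable (ksum J j) <-> (forall k, (1 <= k <= j.+1)%N -> is_diag_mx (J k)).
Proof.
move=> m_gt1 jJ; split => [dJ k hk | /ksum_diag /diag_diagonalizable //].
apply/contraT => /(jordan_defective (jJ k hk)) dJk.
case: (diagonalizable_not_defective dJ); apply: (ksum_defective m_gt1 _ hk dJk).
by move=> i /jJ /jordan_upper_trig.
Qed.

End IteratedKronecker.

Theorem theorem5p3 (p n : nat) (m : nat -> nat) (l r : nat -> 'F_p)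
    (E : fieldExtType 'F_p) (U : forall k, 'M[E]_(m k)) :
  prime p -> (2 <= n)%N -> (forall k, (1 <= k <= n)%N -> (2 <= m k)%N) ->
  splittingFieldFor 1%VS
    (map_poly (in_alg E) (\prod_(1 <= k < n.+1) gpoly (m k) (l k) (r k)))
    fullv ->
  (forall k, (1 <= k <= n)%N ->
     U k \in unitmx /\
     is_jordan_mx (invmx (U k) *m map_mx (in_alg E) (Smx (m k) (l k) (r k)) *m U k)) ->
  let SE := fun k => map_mx (in_alg E) (Smx (m k) (l k) (r k)) in
  let J := fun k => invmx (U k) *m SE k *m U k in
  let UT := kprod U n.-1 in
  let Tn := map_mx (in_alg E) (ksum (fun k => Smx (m k) (l k) (r k)) n.-1) in
  let Jt := ksum J n.-1 in
  [/\ UT \in unitmx,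
      invmx UT *m Tn *m UT = Jt,
      is_upper_trig Jt,
      is_jordan_mx Jt <-> (forall k, (2 <= k <= n)%N -> diagonalizable (SE k))
    & diagonalizable Tn <-> (forall k, (1 <= k <= n)%N -> diagonalizable (SE k))].
Proof.
move=> _ n_ge2 m_gt1 _ UJ SE J UT Tn Jt.
have nE : n.-1.+1 = n by lia.
rewrite -nE in m_gt1 UJ.
have U_unit k hk := (UJ k hk).1; have J_jordan k hk := (UJ k hk).2.
have diagJ k : (1 <= k <= n.-1.+1)%N -> is_diag_mx (J k) <-> diagonalizable (SE k).
  move=> hk; rewrite -(jordan_diagonalizable (J_jordan k hk)).
  by apply: diagonalizable_conj; apply: U_unit.
have [UT_unit UT_conj] :=
  kprod_conj_ksum (in_alg E) (fun k => Smx (m k) (l k) (r k)) U_unit.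
split => //.
- by apply: ksum_upper_trig => k /J_jordan /jordan_upper_trig.
- have J1_jordan : is_jordan_mx (J 1%N) by apply: J_jordan; lia.
  rewrite (ksum_jordan m_gt1 J1_jordan).
  by split => dJ k hk; apply/diagJ; [lia | apply: dJ; lia | lia | apply: dJ; lia].
- have dT : diagonalizable Tn <-> diagonalizable Jt.
    by rewrite -[Jt]UT_conj; apply: iff_sym; apply: diagonalizable_conj.
  rewrite dT (ksum_diagonalizable m_gt1 J_jordan).
  by split => dJ k hk; apply/diagJ; [lia | apply: dJ; lia | lia | apply: dJ; lia].
Qed.
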